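(* Let $\mathfrak n=W\oplus\mathfrak z$ be a finite-dimensional 2-step nilpotent Lie algebra over a field of characteristic zero which is of TST type and satisfies $(\Lambda^2\mathfrak n)^{\mathfrak n}=\Lambda^2\mathfrak z$. Then every Lie bialgebra cobracket $\delta$ on $\mathfrak n$ satisfies $\delta(\mathfrak z)\subseteq\Lambda^2\mathfrak z$ and $\delta(W)\subseteq (W\wedge\mathfrak z)\oplus\Lambda^2\mathfrak z$.
   Context: $\mathfrak z$ is the center of $\mathfrak n$ and $W$ a fixed linear complement. Fix a basis $z_1,\dots,z_m$ of $\mathfrak z$ and define $T_i:W\to W^*$ by $[v,w]=\sum_iT_i(v)(w)z_i$ ($v,w\in W$). $\mathfrak n$ is of TST type if the only linear map $S:W^*\to W$ with $T_iST_k+T_kST_i=0$ for all $i,k$ is $S=0$. $(\Lambda^2\mathfrak n)^{\mathfrak n}$ denotes the invariants of $\Lambda^2\mathfrak n$ under the adjoint action $\mathrm{ad}_x(a\wedge b)=[x,a]\wedge b+a\wedge[x,b]$. A Lie bialgebra cobracket is a linear $\delta:\mathfrak n\to\Lambda^2\mathfrak n$ satisfying co-Jacobi ($\delta(x_1)\wedge x_2-x_1\wedge\delta(x_2)=0$ where $\delta(x)=x_1\wedge x_2$) and $\delta[x,y]=[\delta x,y]+[x,\delta y]$. *)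

(* Coordinate model of a 2-step nilpotent Lie algebra
   n = W (+) z, dim W = d, dim z = m, n = 'rV[F]_(d+m):
   indices i < d are W-coordinates, indices d <= i are z-coordinates
   (z-coordinate d+k is the coefficient of the basis vector z_k).
   Lambda^2 n is modelled by skew-symmetric (d+m)x(d+m) matrices,
   with a /\ b := a^T b - b^T a  (i.e. a(x)b - b(x)a). *)
From HB Require Import structures.
From mathcomp Require Import all_boot all_order all_algebra.
Set Implicit Arguments. Unset Strict Implicit. Unset Printing Implicit Defensive.
Import Order.TTheory GRing.Theory Num.Theory.
Local Open Scope ring_scope.

Section Defs.
Variables (F : fieldType) (d m : nat).
Notation N := (d + m)%N.

(* structure maps T_i : W -> W^*,  T_i(v)(w) = v *m T i *m w^T *)
Variable T : 'I_m -> 'M[F]_d.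

Definition br (x y : 'rV[F]_N) : 'rV[F]_N :=
  row_mx 0 (\row_(k < m) (lsubmx x *m T k *m (lsubmx y)^T) 0 0).

Definition ev (i : 'I_N) : 'rV[F]_N := delta_mx 0 i.

Definition wedge (a b : 'rV[F]_N) : 'M[F]_N := a^T *m b - b^T *m a.

Definition skew (A : 'M[F]_N) : Prop := A^T = - A.

(* adjoint action on Lambda^2 n, defined on the basis e_i /\ e_j (i<j) by
   ad_x(a/\b) = [x,a]/\b + a/\[x,b] and extended linearly
   (a skew A equals sum_{i<j} A i j (e_i /\ e_j)). *)
Definition adL2 (x : 'rV[F]_N) (A : 'M[F]_N) : 'M[F]_N :=
  \sum_(i < N) \sum_(j < N | (i < j)%N)
     A i j *: (wedge (br x (ev i)) (ev j) + wedge (ev i) (br x (ev j))).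

(* Lambda^3 n modelled by alternating 3-tensors; (A /\ c) for A in Lambda^2 *)
Definition wedge3 (A : 'M[F]_N) (c : 'rV[F]_N) (p q r : 'I_N) : F :=
  A p q * c 0 r + A q r * c 0 p + A r p * c 0 q.

Definition isZ (i : 'I_N) : bool := (d <= i)%N.

Definition inL2z (A : 'M[F]_N) : Prop :=
  forall i j : 'I_N, ~~ (isZ i && isZ j) -> A i j = 0.

Definition inWZ_L2z (A : 'M[F]_N) : Prop :=
  forall i j : 'I_N, ~~ isZ i -> ~~ isZ j -> A i j = 0.

Definition is_TST_type : Prop :=
  forall S : 'M[F]_d,
    (forall i k : 'I_m, T i *m S *m T k + T k *m S *m T i = 0) -> S = 0.

Definition invariants_eq_L2z : Prop :=
  forall A : 'M[F]_N, skew A -> ((forall x, adL2 x A = 0) <-> inL2z A).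

Definition is_cobracket (delta : 'rV[F]_N -> 'M[F]_N) : Prop :=
  [/\
      (forall (a : F) x y, delta (a *: x + y) = a *: delta x + delta y),
      (forall x, skew (delta x)),
      (* co-Jacobi: delta(x_1)/\x_2 - x_1/\delta(x_2) = 0, where
         delta(x) = x_1/\x_2 = sum_{i<j} delta(x)_{ij} e_i/\e_j, and
         x_1 /\ delta(x_2) = delta(x_2) /\ x_1 *)
      (forall x (p q r : 'I_N),
         \sum_(i < N) \sum_(j < N | (i < j)%N)
           delta x i j * (wedge3 (delta (ev i)) (ev j) p q r
                          - wedge3 (delta (ev j)) (ev i) p q r) = 0) &
      (forall x y, delta (br x y) = adL2 x (delta y) - adL2 y (delta x))].

End Defs.

From HB Require Import structures.
From mathcomp Require Import all_boot all_order all_algebra.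
Set Implicit Arguments. Unset Strict Implicit. Unset Printing Implicit Defensive.
Import Order.TTheory GRing.Theory Num.Theory.
Local Open Scope ring_scope.

(* For central x the cocycle identity reads delta [y, x] = ad_y (delta x),
   so delta x is n-invariant and hence lies in Lambda^2 z.
   For the W-basis vectors e_r let S_r be the W /\ W block of delta e_r.
   As [e_s, e_r] is central, delta [e_s, e_r] has no W /\ z component, and the
   W /\ z component of the cocycle identity for (e_s, e_r) says that
   (S_r T_k)_(p,s) is symmetric in r and s.  Together with the skew-symmetry of
   the S_r and T_k this makes T_k S_t T_i symmetric, i.e.
   T_i S_t T_k + T_k S_t T_i = 0, so S_t = 0 by the TST condition. *)

Lemma ursubmxB (V : zmodType) m1 m2 n1 n2 (A B : 'M[V]_(m1 + m2, n1 + n2)) :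
  ursubmx (A - B) = ursubmx A - ursubmx B.
Proof. by rewrite /ursubmx !raddfB. Qed.

Lemma sum_skew_pairs (R : pzRingType) (V : lmodType R) n (A : 'M[R]_n)
    (f : 'I_n -> 'I_n -> V) :
  A^T = - A -> (forall i, A i i = 0) ->
  \sum_(i < n) \sum_(j < n | (i < j)%N) A i j *: (f i j - f j i)
    = \sum_(i < n) \sum_(j < n) A i j *: f i j.
Proof.
move=> Askew Adiag.
have Aji i j : A j i = - A i j by move/matrixP: Askew => /(_ i j); rewrite !mxE.
have lower : \sum_(i < n) \sum_(j < n | (j < i)%N) A i j *: f i j
             = - \sum_(i < n) \sum_(j < n | (i < j)%N) A i j *: f j i.
  rewrite (exchange_big_dep xpredT) //= -sumrN; apply: eq_bigr => j _.
  by rewrite -sumrN; apply: eq_bigr => i _; rewrite Aji scaleNr.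
rewrite [RHS](eq_bigr (fun i : 'I_n => \sum_(j < n | (i < j)%N) A i j *: f i j
                        + \sum_(j < n | (j < i)%N) A i j *: f i j)).
  rewrite big_split /= lower -sumrB; apply: eq_bigr => i _.
  by rewrite -sumrB; apply: eq_bigr => j _; rewrite scalerBr.
move=> i _; rewrite (bigID (fun j : 'I_n => (i < j)%N)) /=; congr (_ + _).
rewrite [LHS]big_mkcond [RHS]big_mkcond; apply: eq_bigr => j _.
case: ltngtP => // eq_ij; rewrite (_ : j = i) ?Adiag ?scale0r //.
exact: val_inj.
Qed.

Section Bracket.
Variables (F : fieldType) (d m : nat) (T : 'I_m -> 'M[F]_d).
Local Notation N := (d + m)%N.

Lemma br_lshift x y (j : 'I_d) : br T x y 0 (lshift m j) = 0.
Proof. by rewrite /br row_mxEl mxE. Qed.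

Lemma br_rshift x y (k : 'I_m) :
  br T x y 0 (rshift d k) = (lsubmx x *m T k *m (lsubmx y)^T) 0 0.
Proof. by rewrite /br row_mxEr mxE. Qed.

Lemma lsubmx_br x y : lsubmx (br T x y) = 0.
Proof. by rewrite /br row_mxKl. Qed.

Lemma br_center_l x y : lsubmx x = 0 -> br T x y = 0.
Proof.
move=> x0; rewrite /br x0 -row_mx0; congr row_mx; apply/rowP => k.
by rewrite mxE !mul0mx !mxE.
Qed.

Lemma br_center_r x y : lsubmx y = 0 -> br T x y = 0.
Proof.
move=> y0; rewrite /br y0 -row_mx0; congr row_mx; apply/rowP => k.
by rewrite mxE trmx0 mulmx0 !mxE.
Qed.

Lemma lsubmx_ev_lshift (l : 'I_d) : lsubmx (ev F (lshift m l)) = delta_mx 0 l.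
Proof. by apply/rowP => j; rewrite !mxE eq_lshift. Qed.

Lemma lsubmx_ev_rshift (k : 'I_m) : lsubmx (ev F (rshift d k)) = 0.
Proof. by apply/rowP => j; rewrite !mxE eq_lrshift andbF. Qed.

Lemma adL2_center x A : lsubmx x = 0 -> adL2 T x A = 0.
Proof.
move=> x0; rewrite /adL2 big1 // => i _; rewrite big1 // => j _.
by rewrite !br_center_l // /wedge !trmx0 !mul0mx !mulmx0 !subrr addr0 scaler0.
Qed.

Definition admx (x : 'rV[F]_N) : 'M[F]_N := \matrix_(i < N) br T x (ev F i).

Definition ad_Wz (x : 'rV[F]_N) : 'M[F]_(d, m) :=
  \matrix_(l < d, k < m) (lsubmx x *m T k) 0 l.

Lemma admxE x i j : admx x i j = br T x (ev F i) 0 j.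
Proof. by rewrite mxE. Qed.

Lemma admx_block x : admx x = block_mx 0 (ad_Wz x) 0 0.
Proof.
rewrite -[admx x]submxK; move: (admxE x); move: (admx x) => D DE.
congr block_mx; apply/matrixP => i j; rewrite !mxE DE.
- by rewrite br_lshift.
- by rewrite br_rshift lsubmx_ev_lshift trmx_delta -colE !mxE.
- by rewrite br_lshift.
- by rewrite br_center_r ?lsubmx_ev_rshift // mxE.
Qed.

Lemma adL2E x A : A^T = - A -> (forall i, A i i = 0) ->
  adL2 T x A = (admx x)^T *m A + A *m admx x.
Proof.
move=> Askew Adiag; set D := admx x.
pose g i j := (row i D)^T *m ev F j + (ev F i)^T *m row j D.
have wedge_pair i j : wedge (br T x (ev F i)) (ev F j)
    + wedge (ev F i) (br T x (ev F j)) = g i j - g j i.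
  by rewrite /g /wedge !rowK addrACA -opprD (addrC ((ev F j)^T *m _)).
have gE i j : g i j = D^T *m delta_mx i j + delta_mx i j *m D.
  by rewrite /g /ev !rowE trmx_mul trmx_delta -mulmxA mul_delta_mx mulmxA mul_delta_mx.
rewrite /adL2; under eq_bigr do under eq_bigr do rewrite wedge_pair.
rewrite sum_skew_pairs // [X in D^T *m X]matrix_sum_delta.
rewrite [X in X *m D]matrix_sum_delta mulmx_sumr mulmx_suml -big_split.
apply: eq_bigr => i _; rewrite mulmx_sumr mulmx_suml -big_split.
by apply: eq_bigr => j _; rewrite gE scalerDr scalemxAr scalemxAl.
Qed.

Lemma ursubmx_adL2 x A : A^T = - A -> (forall i, A i i = 0) ->
  ursubmx (adL2 T x A) = ulsubmx A *m ad_Wz x.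
Proof.
move=> Askew Adiag; rewrite adL2E // admx_block -[A]submxK tr_block_mx !trmx0.
by rewrite !mulmx_block add_block_mx block_mxKur submxK !mul0mx !mulmx0 !addr0 add0r.
Qed.

Lemma mul_ad_Wz_evW (S : 'M[F]_d) (s p : 'I_d) (k : 'I_m) :
  (T k)^T = - T k ->
  (S *m ad_Wz (ev F (lshift m s))) p k = - (S *m T k) p s.
Proof.
move=> Tk_skew; rewrite mxE [(S *m T k) p s]mxE -sumrN; apply: eq_bigr => l _.
rewrite [ad_Wz _ _ _]mxE lsubmx_ev_lshift -rowE mxE -mulrN; congr (_ * _).
by move/matrixP: Tk_skew => /(_ l s); rewrite !mxE.
Qed.

End Bracket.

Lemma TST_anticomm_of_sym (R : comPzRingType) (d m : nat)
    (T : 'I_m -> 'M[R]_d) (S : 'I_d -> 'M[R]_d) :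
  (forall k, (T k)^T = - T k) -> (forall r, (S r)^T = - S r) ->
  (forall k r s p, (S r *m T k) p s = (S s *m T k) p r) ->
  forall t i k, T i *m S t *m T k + T k *m S t *m T i = 0.
Proof.
move=> Tskew Sskew Ssym t i k.
have TS_ST k' u v q : (T k' *m S u) v q = (S u *m T k') q v.
  transitivity ((T k' *m S u)^T q v); first by rewrite [RHS]mxE.
  by rewrite trmx_mul Tskew Sskew mulNmx mulmxN opprK.
set M := T k *m S t *m T i.
have M_sym u v : M v u = M u v.
  rewrite /M -!mulmxA !mxE.
  transitivity ((T k *m S u *m T i) v t).
    by rewrite -mulmxA mxE; apply: eq_bigr => p _; rewrite Ssym.
  transitivity ((T k *m S v *m T i) u t).
    by rewrite !mxE; apply: eq_bigr => q _; rewrite !TS_ST Ssym.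
  by rewrite -mulmxA mxE; apply: eq_bigr => p _; rewrite Ssym.
have : M^T = M by apply/matrixP => u v; rewrite mxE M_sym.
rewrite /M !trmx_mul Tskew Sskew Tskew !mulNmx !mulmxN opprK mulmxA => <-.
exact: subrr.
Qed.

Section Cobracket.
Variables (F : fieldType) (d m : nat) (T : 'I_m -> 'M[F]_d).
Variable delta : 'rV[F]_(d + m) -> 'M[F]_(d + m).
Hypothesis cobr : is_cobracket T delta.

Lemma cobracket0 : delta 0 = 0.
Proof.
case: cobr => lin _ _ _; have := lin 1 0 0.
by rewrite !scale1r !addr0 => /esym/eqP; rewrite -subr_eq0 addrK => /eqP.
Qed.

Lemma cobracket_expand x : delta x = \sum_(j < d + m) x 0 j *: delta (ev F j).
Proof.
case: cobr => lin _ _ _.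
have deltaD y z : delta (y + z) = delta y + delta z.
  by rewrite -{1}[y]scale1r lin scale1r.
rewrite {1}[x]row_sum_delta (big_morph delta deltaD cobracket0).
by apply: eq_bigr => j _; rewrite -[_ *: _]addr0 lin cobracket0 addr0.
Qed.

Hypothesis inv : invariants_eq_L2z T.

Lemma cobracket_center_L2z x : lsubmx x = 0 -> inL2z (delta x).
Proof.
case: cobr => _ skew_delta _ cocycle x0.
apply/(inv (skew_delta x)) => y.
have := cocycle y x.
by rewrite br_center_r // cobracket0 [adL2 T x _]adL2_center // subr0 => <-.
Qed.

Hypothesis two_neq0 : 2%:R != 0 :> F.

Lemma cobracket_diag x i : delta x i i = 0.
Proof.
case: cobr => _ skew_delta _ _.
move/matrixP: (skew_delta x) => /(_ i i); rewrite !mxE => /eqP.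
rewrite -subr_eq0 opprK -mulr2n -mulr_natr mulf_eq0 (negbTE two_neq0) orbF.
by move/eqP.
Qed.

Lemma ursubmx_adL2_cobracket x y :
  ursubmx (adL2 T x (delta y)) = ulsubmx (delta y) *m ad_Wz T x.
Proof.
case: cobr => _ skew_delta _ _.
by apply: ursubmx_adL2 (skew_delta y) _ => i; apply: cobracket_diag.
Qed.

Hypothesis Tskew : forall k, (T k)^T = - T k.

Lemma ulsubmx_cobracket_evW_sym k r s p :
  (ulsubmx (delta (ev F (lshift m r))) *m T k) p s
  = (ulsubmx (delta (ev F (lshift m s))) *m T k) p r.
Proof.
case: cobr => _ _ _ cocycle.
have central : ursubmx (delta (br T (ev F (lshift m s)) (ev F (lshift m r)))) = 0.
  apply/matrixP => p' k'; rewrite !mxE (cobracket_center_L2z (lsubmx_br _ _ _)) //.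
  by rewrite /isZ /= leqNgt ltn_ord.
have E : ulsubmx (delta (ev F (lshift m r))) *m ad_Wz T (ev F (lshift m s))
  = ulsubmx (delta (ev F (lshift m s))) *m ad_Wz T (ev F (lshift m r)).
  by apply/eqP; rewrite -subr_eq0 -!ursubmx_adL2_cobracket -ursubmxB -cocycle central.
move/matrixP: E => /(_ p k).
by rewrite !mul_ad_Wz_evW // => /oppr_inj.
Qed.

Hypothesis tst : is_TST_type T.

Lemma ulsubmx_cobracket_evW (r : 'I_d) : ulsubmx (delta (ev F (lshift m r))) = 0.
Proof.
case: cobr => _ skew_delta _ _.
apply: tst => i k.
apply: (TST_anticomm_of_sym (S := fun s => ulsubmx (delta (ev F (lshift m s))))).
- exact: Tskew.
- by move=> s; rewrite trmx_ulsub skew_delta /ulsubmx !raddfN.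
- exact: ulsubmx_cobracket_evW_sym.
Qed.

Lemma cobracket_W_WZ_L2z x : rsubmx x = 0 -> inWZ_L2z (delta x).
Proof.
move=> x0 i j; rewrite /isZ -!ltnNge => ltid ltjd.
have -> : i = lshift m (Ordinal ltid) by apply/val_inj.
have -> : j = lshift m (Ordinal ltjd) by apply/val_inj.
rewrite cobracket_expand summxE big_split_ord /=.
rewrite !big1 ?addr0 => [//|l _|l _]; rewrite mxE.
- by move/matrixP: x0 => /(_ 0 l); rewrite !mxE => ->; rewrite mul0r.
- move/matrixP: (ulsubmx_cobracket_evW l) => /(_ (Ordinal ltid) (Ordinal ltjd)).
  by rewrite !mxE => ->; rewrite mulr0.
Qed.

End Cobracket.

Theorem mainTheorem5 (F : fieldType) (d m : nat) (T : 'I_m -> 'M[F]_d)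
  (char0 : [pchar F] =i pred0)
  (Tskew : forall i, (T i)^T = - T i)
  (nonab : exists x y : 'rV[F]_(d + m), br T x y != 0)
  (center_z : forall x : 'rV[F]_(d + m),
      (forall y, br T x y = 0) <-> lsubmx x = 0)
  (tst : is_TST_type T)
  (inv : invariants_eq_L2z T)
  (delta : 'rV[F]_(d + m) -> 'M[F]_(d + m))
  (hdelta : is_cobracket T delta) :
  (forall x, lsubmx x = 0 -> inL2z (delta x)) /\
  (forall x, rsubmx x = 0 -> inWZ_L2z (delta x)).
Proof.
have two_neq0 : 2%:R != 0 :> F by move/pcharf0P: char0 => ->.
split => x.
- exact: cobracket_center_L2z hdelta inv x.
- exact: cobracket_W_WZ_L2z hdelta inv two_neq0 Tskew tst x.
Qed.
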